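(* Let $I$ be a non-empty upward directed (pre)ordered set. The following statements are equivalent: (1) $I$ has a maximal element, or $I$ contains a countable cofinal sequence. (2) Every surjective $I$-inverse system $\{X_\alpha, f_{\alpha\beta}\}$ of non-empty sets has a non-empty inverse limit. (3) For every morphism $\mathbf g=(g_\alpha)_{\alpha\in I}:\{E_\alpha,\epsilon_{\alpha\beta}\}\to\{S_\alpha,\sigma_{\alpha\beta}\}$ of $I$-inverse systems of sets such that every $g_\alpha$ is surjective, every $\epsilon_{\alpha\beta}$ is surjective and every $\sigma_{\alpha\beta}$ is injective, the induced map $\varprojlim \mathbf g:\varprojlim E_\alpha\to\varprojlim S_\alpha$ is surjective. (4) Every $I$-inverse system of non-empty sets $\{X_\alpha, f_{\alpha\beta}\}$ satisfying the Mittag-Leffler condition has a non-empty inverse limit. (5) For every group $G$, every surjective $I$-inverse system of non-empty transitive $G$-sets (with $G$-equivariant transition maps) has a non-empty inverse limit.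
   Context: An $I$-inverse system $\{X_\alpha, f_{\alpha\beta}:X_\beta\to X_\alpha \mid \alpha\le\beta\in I\}$ consists of objects $X_\alpha$ and maps $f_{\alpha\beta}$ for $\alpha\le\beta$ with $f_{\alpha\alpha}=\mathrm{id}$ and $f_{\alpha\beta}f_{\beta\gamma}=f_{\alpha\gamma}$ for $\alpha\le\beta\le\gamma$. It is called surjective if all $f_{\alpha\beta}$ are surjective. It satisfies the Mittag-Leffler (ML) condition if for every $i\in I$ there is $j\ge i$ such that $f_{ik}(X_k)=f_{ij}(X_j)$ for all $k\ge j$. A $G$-set is a non-empty set with an action of the group $G$; it is transitive if for all $x_1,x_2$ there is $g\in G$ with $gx_1=x_2$. *)

Definition directed_preorder {I : Type} (le : I -> I -> Prop) : Prop :=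
  (forall a, le a a) /\
  (forall a b c, le a b -> le b c -> le a c) /\
  (forall a b, exists c, le a c /\ le b c).

Definition is_maximal {I : Type} (le : I -> I -> Prop) (m : I) : Prop :=
  forall x, le m x -> le x m.

(** A countable cofinal sequence (a sequence indexed by nat; finite
    sequences are covered by repetition). *)
Definition has_countable_cofinal_seq {I : Type} (le : I -> I -> Prop) : Prop :=
  exists s : nat -> I, forall i, exists n, le i (s n).

(** An I-inverse system: maps f a b (for a <= b) from X b to X a,
    with f a a = id and f a b o f b c = f a c.  The maps take the proof
    of a <= b as argument; the axioms hold for all such proofs. *)
Definition is_inverse_system {I : Type} (le : I -> I -> Prop)
  (X : I -> Type) (f : forall a b, le a b -> X b -> X a) : Prop :=
  (forall a (h : le a a) x, f a a h x = x) /\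
  (forall a b c (hab : le a b) (hbc : le b c) (hac : le a c) x,
      f a b hab (f b c hbc x) = f a c hac x).

Definition in_inv_limit {I : Type} (le : I -> I -> Prop)
  (X : I -> Type) (f : forall a b, le a b -> X b -> X a)
  (x : forall a, X a) : Prop :=
  forall a b (h : le a b), f a b h (x b) = x a.

Definition inv_limit_nonempty {I : Type} (le : I -> I -> Prop)
  (X : I -> Type) (f : forall a b, le a b -> X b -> X a) : Prop :=
  exists x : forall a, X a, in_inv_limit le X f x.

Definition surjective_system {I : Type} (le : I -> I -> Prop)
  (X : I -> Type) (f : forall a b, le a b -> X b -> X a) : Prop :=
  forall a b (h : le a b) (y : X a), exists x : X b, f a b h x = y.

Definition injective_system {I : Type} (le : I -> I -> Prop)
  (X : I -> Type) (f : forall a b, le a b -> X b -> X a) : Prop :=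
  forall a b (h : le a b) (x y : X b), f a b h x = f a b h y -> x = y.

Definition mittag_leffler {I : Type} (le : I -> I -> Prop)
  (X : I -> Type) (f : forall a b, le a b -> X b -> X a) : Prop :=
  forall i, exists j (hij : le i j),
    forall k (hjk : le j k) (hik : le i k) (y : X i),
      (exists x : X k, f i k hik x = y) <-> (exists x : X j, f i j hij x = y).

Record Group := {
  gcar :> Type;
  gmul : gcar -> gcar -> gcar;
  gone : gcar;
  ginv : gcar -> gcar;
  gmulA : forall x y z, gmul x (gmul y z) = gmul (gmul x y) z;
  gmul1l : forall x, gmul gone x = x;
  gmulVl : forall x, gmul (ginv x) x = gone
}.

Definition is_action (G : Group) (Y : Type) (act : G -> Y -> Y) : Prop :=
  (forall y, act (gone G) y = y) /\
  (forall g h y, act (gmul G g h) y = act g (act h y)).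

Definition transitive_action (G : Group) (Y : Type) (act : G -> Y -> Y) : Prop :=
  forall y1 y2, exists g, act g y1 = y2.

Definition cond1 {I : Type} (le : I -> I -> Prop) : Prop :=
  (exists m, is_maximal le m) \/ has_countable_cofinal_seq le.

Definition cond2 {I : Type} (le : I -> I -> Prop) : Prop :=
  forall (X : I -> Type) (f : forall a b, le a b -> X b -> X a),
    is_inverse_system le X f ->
    surjective_system le X f ->
    (forall a, inhabited (X a)) ->
    inv_limit_nonempty le X f.

Definition cond3 {I : Type} (le : I -> I -> Prop) : Prop :=
  forall (E : I -> Type) (eps : forall a b, le a b -> E b -> E a)
         (S : I -> Type) (sig : forall a b, le a b -> S b -> S a)
         (g : forall a, E a -> S a),
    is_inverse_system le E eps ->
    is_inverse_system le S sig ->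
    (forall a b (h : le a b) x, g a (eps a b h x) = sig a b h (g b x)) ->
    (forall a (s : S a), exists e : E a, g a e = s) ->
    surjective_system le E eps ->
    injective_system le S sig ->
    forall s : forall a, S a, in_inv_limit le S sig s ->
      exists e : forall a, E a, in_inv_limit le E eps e /\
        (forall a, g a (e a) = s a).

Definition cond4 {I : Type} (le : I -> I -> Prop) : Prop :=
  forall (X : I -> Type) (f : forall a b, le a b -> X b -> X a),
    is_inverse_system le X f ->
    (forall a, inhabited (X a)) ->
    mittag_leffler le X f ->
    inv_limit_nonempty le X f.

Definition cond5 {I : Type} (le : I -> I -> Prop) : Prop :=
  forall (G : Group) (X : I -> Type) (f : forall a b, le a b -> X b -> X a)
         (act : forall a, G -> X a -> X a),
    is_inverse_system le X f ->
    surjective_system le X f ->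
    (forall a, inhabited (X a)) ->
    (forall a, is_action G (X a) (act a)) ->
    (forall a, transitive_action G (X a) (act a)) ->
    (forall a b (h : le a b) (g : G) x, f a b h (act b g x) = act a g (f a b h x)) ->
    inv_limit_nonempty le X f.

From Stdlib Require Import Classical ClassicalEpsilon FunctionalExtensionality ProofIrrelevance List Lia.

(** (1) => (2): a cofinal sequence can be made into an increasing chain; a
    surjective system has a thread along the chain (dependent choice), and
    restricting the thread to every index gives a limit point.
    (2) <=> (3), (2) <=> (4): (3) and (4) are obtained from (2) applied to
    suitable subsystems (the fibres over a compatible family, resp. the
    universal images), and conversely (2) is a special case of each.
    (2) => (5) is immediate.
    (5) => (1): the first-passage system [Z] (lists stopping at the first entry
    above [a]) is surjective, and any limit point of it yields a cofinal
    sequence.  To realize [Z] by transitive G-sets, let [G] be the symmetric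
    group of [W = (list I)^nat] acting on the homogeneous maps [W -> Z a]
    (all fibres in bijection with [W]); Hilbert's hotel shows that these are
    preserved by truncation and form a single orbit. *)

Lemma sig_ext {A : Type} {P : A -> Prop} (x y : sig P) :
  proj1_sig x = proj1_sig y -> x = y.
Proof.
  destruct x as [x hx], y as [y hy]; simpl; intros <-.
  f_equal; apply proof_irrelevance.
Qed.

Lemma tower_thread (Y : nat -> Type) (p : forall n, Y (S n) -> Y n)
  (p_surj : forall n (y : Y n), exists x, p n x = y) (y0 : Y 0) :
  exists xs : forall n, Y n, forall n, p n (xs (S n)) = xs n.
Proof.
  assert (lift : forall n, {l : Y n -> Y (S n) | forall y, p n (l y) = y}).
  { intros n.
    exists (fun y => proj1_sig (constructive_indefinite_description _ (p_surj n y))).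
    intros y; exact (proj2_sig (constructive_indefinite_description _ (p_surj n y))). }
  exists (fix xs n := match n return Y n with
                      | 0 => y0
                      | S m => proj1_sig (lift m) (xs m)
                      end).
  intros n; apply (proj2_sig (lift n)).
Qed.

Section Chains.

Context {I : Type} (le : I -> I -> Prop).
Hypothesis le_refl : forall a, le a a.
Hypothesis le_trans : forall a b c, le a b -> le b c -> le a c.
Hypothesis le_dir : forall a b, exists c, le a c /\ le b c.

(** Under either alternative of condition (1) there is a cofinal sequence:
    a maximal element of a directed set is a greatest element. *)
Lemma cofinal_seq_of_cond1 : cond1 le -> has_countable_cofinal_seq le.
Proof.
  intros [[m Hm] | Hs]; [| exact Hs].
  exists (fun _ => m); intros i; exists 0.
  destruct (le_dir i m) as [c [hic hmc]].
  exact (le_trans _ _ _ hic (Hm c hmc)).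
Qed.

(** A cofinal sequence can be made increasing, by taking running upper bounds. *)
Lemma cofinal_chain :
  has_countable_cofinal_seq le ->
  exists t : nat -> I, (forall n, le (t n) (t (S n))) /\ (forall i, exists n, le i (t n)).
Proof.
  intros [s Hs].
  destruct (choice (fun (ab : I * I) c => le (fst ab) c /\ le (snd ab) c))
    as [join Hjoin].
  { intros [a b]; exact (le_dir a b). }
  set (t := fix t n := match n with
                       | 0 => s 0
                       | S m => join (t m, s (S m))
                       end).
  assert (s_le_t : forall n, le (s n) (t n)).
  { intros [| n]; [apply le_refl | apply (Hjoin (t n, s (S n)))]. }
  exists t; split.
  - intros n; apply (Hjoin (t n, s (S n))).
  - intros i; destruct (Hs i) as [n hn]; exists n; exact (le_trans _ _ _ hn (s_le_t n)).
Qed.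

Lemma chain_mono (t : nat -> I) (t_step : forall n, le (t n) (t (S n))) n m :
  n <= m -> le (t n) (t m).
Proof.
  induction 1 as [| m _ IH]; [apply le_refl | exact (le_trans _ _ _ IH (t_step m))].
Qed.

Section AlongChain.

Variables (X : I -> Type) (f : forall a b, le a b -> X b -> X a).
Hypothesis f_inv : is_inverse_system le X f.
Variables (t : nat -> I) (xs : forall n, X (t n)).
Hypothesis t_step : forall n, le (t n) (t (S n)).
Hypothesis xs_thread : forall n, f _ _ (t_step n) (xs (S n)) = xs n.

Lemma thread_compatible n m (hnm : n <= m) (h : le (t n) (t m)) :
  f _ _ h (xs m) = xs n.
Proof.
  destruct f_inv as [f_id f_comp].
  revert h; induction hnm as [| m hnm IH]; intros h; [apply f_id |].
  rewrite <- (f_comp _ _ _ (chain_mono t t_step n m hnm) (t_step m) h), xs_thread.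
  apply IH.
Qed.

Lemma thread_restrictions_agree a n m (hn : le a (t n)) (hm : le a (t m)) :
  f _ _ hn (xs n) = f _ _ hm (xs m).
Proof.
  destruct f_inv as [_ f_comp].
  assert (agree : forall n' m' (hn' : le a (t n')) (hm' : le a (t m')), n' <= m' ->
            f _ _ hn' (xs n') = f _ _ hm' (xs m')).
  { intros n' m' hn' hm' hnm.
    rewrite <- (thread_compatible n' m' hnm (chain_mono t t_step n' m' hnm)).
    apply f_comp. }
  assert (Hnm : n <= m \/ m <= n) by lia.
  destruct Hnm; [apply agree | symmetry; apply agree]; assumption.
Qed.

End AlongChain.

(** (1) => (2): thread a surjective system along an increasing cofinal chain,
    then restrict the thread to every index. *)
Lemma cond1_cond2 : cond1 le -> cond2 le.
Proof.
  intros H1 X f f_inv f_surj X_inh.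
  destruct (cofinal_chain (cofinal_seq_of_cond1 H1)) as [t [t_step t_cof]].
  destruct (X_inh (t 0)) as [x0].
  destruct (tower_thread (fun n => X (t n)) (fun n => f _ _ (t_step n))
              (fun n => f_surj _ _ (t_step n)) x0) as [xs xs_thread].
  destruct (choice (fun a n => le a (t n)) t_cof) as [N HN].
  exists (fun a => f _ _ (HN a) (xs (N a))).
  intros a b h.
  pose proof f_inv as [_ f_comp].
  rewrite (f_comp _ _ _ h (HN b) (le_trans _ _ _ h (HN b))).
  apply (thread_restrictions_agree X f f_inv t xs t_step xs_thread).
Qed.

End Chains.

Section Subsystems.

Context {I : Type} (le : I -> I -> Prop).
Variables (X : I -> Type) (f : forall a b, le a b -> X b -> X a).
Variable P : forall a, X a -> Prop.
Hypothesis P_stable : forall a b (h : le a b) x, P b x -> P a (f a b h x).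

Definition subsystem (a : I) : Type := {x : X a | P a x}.

Definition submap a b (h : le a b) (x : subsystem b) : subsystem a :=
  exist _ (f a b h (proj1_sig x)) (P_stable a b h _ (proj2_sig x)).

Lemma subsystem_inverse : is_inverse_system le X f -> is_inverse_system le subsystem submap.
Proof.
  intros [f_id f_comp]; split.
  - intros a h x; apply sig_ext, f_id.
  - intros a b c hab hbc hac x; apply sig_ext, f_comp.
Qed.

Lemma subsystem_limit :
  inv_limit_nonempty le subsystem submap ->
  exists x, in_inv_limit le X f x /\ forall a, P a (x a).
Proof.
  intros [x Hx]; exists (fun a => proj1_sig (x a)); split.
  - intros a b h; rewrite <- (Hx a b h); reflexivity.
  - intros a; exact (proj2_sig (x a)).
Qed.

End Subsystems.

(** (2) => (3): lifting a compatible family [s] amounts to finding a point in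
    the limit of the fibres [g a ^-1 (s a)]; these form a surjective system
    because the [sig] maps are injective. *)
Lemma cond2_cond3 {I : Type} (le : I -> I -> Prop) : cond2 le -> cond3 le.
Proof.
  intros H2 E eps S sig g E_inv S_inv g_nat g_surj eps_surj sig_inj s s_lim.
  set (P := fun a e => g a e = s a).
  assert (P_stable : forall a b (h : le a b) e, P b e -> P a (eps a b h e)).
  { unfold P; intros a b h e he; rewrite g_nat, he; apply s_lim. }
  apply (subsystem_limit le E eps P P_stable), H2.
  - exact (subsystem_inverse le E eps P P_stable E_inv).
  - intros a b h [e he].
    destruct (eps_surj a b h e) as [e' he'].
    assert (he'P : P b e').
    { apply (sig_inj a b h); rewrite <- g_nat, he', he; symmetry; apply s_lim. }
    exists (exist _ e' he'P); apply sig_ext; exact he'.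
  - intros a; destruct (g_surj a (s a)) as [e he]; exact (inhabits (exist _ e he)).
Qed.

(** (3) => (2): apply (3) to the morphism from [X] to the constant one-point system. *)
Lemma cond3_cond2 {I : Type} (le : I -> I -> Prop) : cond3 le -> cond2 le.
Proof.
  intros H3 X f f_inv f_surj X_inh.
  destruct (H3 X f (fun _ => unit) (fun _ _ _ _ => tt) (fun _ _ => tt) f_inv)
    with (s := fun _ : I => tt) as [x [Hx _]].
  - split; intros; destruct x; reflexivity.
  - reflexivity.
  - intros a []; destruct (X_inh a) as [x]; exists x; reflexivity.
  - exact f_surj.
  - intros a b h [] [] _; reflexivity.
  - intros a b h; reflexivity.
  - exists x; exact Hx.
Qed.

Lemma cond2_cond5 {I : Type} (le : I -> I -> Prop) : cond2 le -> cond5 le.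
Proof. intros H2 G X f act f_inv f_surj X_inh _ _ _; apply H2; assumption. Qed.

(** (4) => (2): a surjective system satisfies Mittag-Leffler with [j = i]. *)
Lemma cond4_cond2 {I : Type} (le : I -> I -> Prop) :
  (forall a, le a a) -> cond4 le -> cond2 le.
Proof.
  intros le_refl H4 X f f_inv f_surj X_inh; apply H4; [assumption | assumption |].
  intros i; exists i, (le_refl i); intros k _ hik y; split; intros _; apply f_surj.
Qed.

Section MittagLeffler.

Context {I : Type} (le : I -> I -> Prop).
Hypothesis le_trans : forall a b c, le a b -> le b c -> le a c.
Hypothesis le_dir : forall a b, exists c, le a c /\ le b c.
Variables (X : I -> Type) (f : forall a b, le a b -> X b -> X a).
Hypothesis f_comp : forall a b c (hab : le a b) (hbc : le b c) (hac : le a c) x,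
  f a b hab (f b c hbc x) = f a c hac x.

Definition universal_image a (y : X a) : Prop :=
  forall k (h : le a k), exists x : X k, f a k h x = y.

Lemma universal_image_stable a b (h : le a b) y :
  universal_image b y -> universal_image a (f a b h y).
Proof.
  intros hy k hak.
  destruct (le_dir k b) as [l [hkl hbl]].
  destruct (hy l hbl) as [x hx].
  exists (f k l hkl x).
  rewrite (f_comp _ _ _ hak hkl (le_trans _ _ _ hak hkl)), <- hx.
  symmetry; apply f_comp.
Qed.

Lemma stable_image_universal b j (hbj : le b j) :
  (forall k (hjk : le j k) (hbk : le b k) (y : X b),
      (exists x : X k, f b k hbk x = y) <-> (exists x : X j, f b j hbj x = y)) ->
  forall z : X j, universal_image b (f b j hbj z).
Proof.
  intros Hj z k hbk.
  destruct (le_dir k j) as [m [hkm hjm]].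
  destruct (proj2 (Hj m hjm (le_trans _ _ _ hbk hkm) _) (ex_intro _ z eq_refl)) as [w hw].
  exists (f k m hkm w); rewrite (f_comp _ _ _ hbk hkm (le_trans _ _ _ hbk hkm)); exact hw.
Qed.

End MittagLeffler.

(** (2) => (4): under Mittag-Leffler the universal images form a surjective
    system of nonempty sets, whose limit points are limit points of [X]. *)
Lemma cond2_cond4 {I : Type} (le : I -> I -> Prop) :
  directed_preorder le -> cond2 le -> cond4 le.
Proof.
  intros [_ [le_trans le_dir]] H2 X f f_inv X_inh f_ml.
  pose proof f_inv as [_ f_comp].
  set (P := universal_image le X f).
  set (P_stable := universal_image_stable le le_trans le_dir X f f_comp).
  destruct (subsystem_limit le X f P P_stable) as [x [Hx _]]; [| exists x; exact Hx].
  apply H2.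
  - exact (subsystem_inverse le X f P P_stable f_inv).
  - intros a b h [y hy].
    destruct (f_ml b) as [j [hbj Hj]].
    destruct (hy j (le_trans _ _ _ h hbj)) as [z hz].
    exists (exist _ _ (stable_image_universal le le_trans le_dir X f f_comp b j hbj Hj z)).
    apply sig_ext; simpl.
    rewrite (f_comp _ _ _ h hbj (le_trans _ _ _ h hbj)); exact hz.
  - intros a; destruct (f_ml a) as [j [haj Hj]]; destruct (X_inh j) as [z].
    exact (inhabits (exist _ _ (stable_image_universal le le_trans le_dir X f f_comp a j haj Hj z))).
Qed.

Record Bij (A B : Type) := mkBij {
  fwd : A -> B;
  bwd : B -> A;
  bwd_fwd : forall x, bwd (fwd x) = x;
  fwd_bwd : forall y, fwd (bwd y) = y }.
Arguments mkBij {A B}. Arguments fwd {A B}. Arguments bwd {A B}.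
Arguments bwd_fwd {A B}. Arguments fwd_bwd {A B}.

Definition bid (A : Type) : Bij A A :=
  mkBij (fun x => x) (fun x => x) (fun _ => eq_refl) (fun _ => eq_refl).

Definition binv {A B} (g : Bij A B) : Bij B A :=
  mkBij (bwd g) (fwd g) (fwd_bwd g) (bwd_fwd g).

Definition bcomp {A B C} (g : Bij B C) (h : Bij A B) : Bij A C.
Proof.
  refine (mkBij (fun x => fwd g (fwd h x)) (fun z => bwd h (bwd g z)) _ _).
  - intros x; rewrite !bwd_fwd; reflexivity.
  - intros z; rewrite !fwd_bwd; reflexivity.
Defined.

Lemma bij_ext {A B} (g h : Bij A B) : (forall x, fwd g x = fwd h x) -> g = h.
Proof.
  intros E.
  assert (Ef : fwd g = fwd h) by (apply functional_extensionality; exact E).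
  assert (Eb : bwd g = bwd h).
  { apply functional_extensionality; intros y.
    rewrite <- (fwd_bwd h y) at 1; rewrite <- E; apply bwd_fwd. }
  destruct g as [f1 b1 p1 q1], h as [f2 b2 p2 q2]; simpl in *; subst.
  f_equal; apply proof_irrelevance.
Qed.

Definition Sym (O : Type) : Group.
Proof.
  refine {| gcar := Bij O O; gmul := bcomp; gone := bid O; ginv := binv |}.
  - intros; apply bij_ext; reflexivity.
  - intros; apply bij_ext; reflexivity.
  - intros; apply bij_ext; intros z; apply bwd_fwd.
Defined.

Definition scons {U} (u : U) (s : nat -> U) : nat -> U :=
  fun n => match n with 0 => u | S m => s m end.
Definition stail {U} (s : nat -> U) : nat -> U := fun n => s (S n).

Lemma scons_stail {U} (s : nat -> U) : scons (s 0) (stail s) = s.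
Proof. apply functional_extensionality; intros [| n]; reflexivity. Qed.

Section Hotel.

Context {U : Type} (u0 : U) (P : U -> Prop).
Hypothesis P_u0 : P u0.

(** [s] is a (possibly empty) run of [u0]'s followed by an entry outside [P]:
    exactly the sequences that get shifted one room up by the hotel. *)
Definition escapes (s : nat -> U) : Prop :=
  exists n, (forall k, k < n -> s k = u0) /\ ~ P (s n).

Lemma escapes_scons s : escapes (scons u0 s) <-> escapes s.
Proof.
  split.
  - intros [[| n] [hrun hout]]; [contradiction |].
    exists n; split; [intros k hk; apply (hrun (S k)); lia | exact hout].
  - intros [n [hrun hout]]; exists (S n); split; [| exact hout].
    intros [| k] hk; [reflexivity | apply hrun; lia].
Qed.

Lemma escapes_head s : P (s 0) -> escapes s -> s 0 = u0.
Proof. intros hs [[| n] [hrun hout]]; [contradiction | apply hrun; lia]. Qed.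

(** The hotel moves escaping sequences one room up by prepending [u0], so that
    every image starts in [P]; [unshift] undoes this. *)
Definition shift (s : nat -> U) : nat -> U :=
  if excluded_middle_informative (escapes s) then scons u0 s else s.
Definition unshift (t : nat -> U) : nat -> U :=
  if excluded_middle_informative (escapes t) then stail t else t.

Lemma shift_head s : P (shift s 0).
Proof.
  unfold shift; destruct (excluded_middle_informative (escapes s)) as [e | ne];
    [exact P_u0 |].
  apply NNPP; intros hout; apply ne; exists 0; split; [intros; lia | exact hout].
Qed.

Lemma unshift_shift s : unshift (shift s) = s.
Proof.
  unfold shift, unshift.
  destruct (excluded_middle_informative (escapes s)) as [e | ne].
  - destruct (excluded_middle_informative (escapes (scons u0 s))) as [_ | ne'];
      [reflexivity | exfalso; apply ne', escapes_scons, e].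
  - destruct (excluded_middle_informative (escapes s)); [contradiction | reflexivity].
Qed.

Lemma shift_unshift t : P (t 0) -> shift (unshift t) = t.
Proof.
  intros ht; unfold shift, unshift.
  destruct (excluded_middle_informative (escapes t)) as [e | ne].
  - assert (Et : t = scons u0 (stail t)).
    { rewrite <- (escapes_head t ht e); symmetry; apply scons_stail. }
    assert (e' : escapes (stail t)) by (apply escapes_scons; rewrite <- Et; exact e).
    destruct (excluded_middle_informative (escapes (stail t))) as [_ | ne'];
      [symmetry; exact Et | contradiction].
  - destruct (excluded_middle_informative (escapes t)); [contradiction | reflexivity].
Qed.

Definition hotel : Bij (nat -> U) {t : nat -> U | P (t 0)}.
Proof.
  refine (mkBij (fun s => exist _ (shift s) (shift_head s))
                (fun t => unshift (proj1_sig t)) unshift_shift _).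
  intros [t ht]; apply sig_ext, shift_unshift, ht.
Defined.

End Hotel.

(** If [A] is nonempty and injects into [U], then [A * U^nat] is in bijection
    with [U^nat]: encode [(a, s)] as [i a :: s], then use the hotel. *)
Definition absorb {A U} (i : A -> U) (inj : forall x y, i x = i y -> x = y) (a0 : A) :
  Bij (A * (nat -> U)) (nat -> U).
Proof.
  set (P := fun u => exists a, i a = u).
  refine (bcomp (binv (hotel (i a0) P (ex_intro _ a0 eq_refl)))
    (mkBij (fun p => exist (fun t => P (t 0)) (scons (i (fst p)) (snd p))
                       (ex_intro _ (fst p) eq_refl))
           (fun t => (proj1_sig (constructive_indefinite_description _ (proj2_sig t)),
                      stail (proj1_sig t))) _ _)).
  - intros [a s]; simpl.
    destruct (constructive_indefinite_description _ _) as [a' ha']; simpl in *.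
    rewrite (inj _ _ ha'); reflexivity.
  - intros [t ht]; apply sig_ext; simpl.
    destruct (constructive_indefinite_description _ _) as [a' ha']; simpl.
    rewrite ha'; apply scons_stail.
Defined.

Definition fib {W T} (p : W -> T) (y : T) : Type := {w : W | p w = y}.

Definition fib_transport {A B C} (h : Bij A B) (q : B -> C) (y : C) :
  Bij (fib (fun a => q (fwd h a)) y) (fib q y).
Proof.
  refine (mkBij (fun a : fib (fun a => q (fwd h a)) y =>
                   exist (fun b => q b = y) (fwd h (proj1_sig a)) (proj2_sig a))
                (fun b => exist (fun a => q (fwd h a) = y) (bwd h (proj1_sig b))
                            (eq_trans (f_equal q (fwd_bwd h _)) (proj2_sig b))) _ _).
  - intros [a ha]; apply sig_ext; apply bwd_fwd.
  - intros [b hb]; apply sig_ext; apply fwd_bwd.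
Defined.

Definition fib_fst_map {T T' F} (f : T -> T') (y : T') :
  Bij (fib (fun z : T * F => f (fst z)) y) (fib f y * F).
Proof.
  refine (mkBij (fun z : fib (fun z : T * F => f (fst z)) y =>
                  (exist (fun t => f t = y) (fst (proj1_sig z)) (proj2_sig z),
                           snd (proj1_sig z)))
                (fun p : fib f y * F => exist (fun z : T * F => f (fst z) = y)
                            (proj1_sig (fst p), snd p) (proj2_sig (fst p))) _ _).
  - intros [[t o] e]; reflexivity.
  - intros [[t e] o]; reflexivity.
Defined.

Definition bij_of_fibers {A B F} (p : A -> B) (e : forall b, Bij (fib p b) F) :
  Bij A (B * F).
Proof.
  refine (mkBij (fun a => (p a, fwd (e (p a)) (exist _ a eq_refl)))
                (fun bo => proj1_sig (bwd (e (fst bo)) (snd bo))) _ _).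
  - intros a; simpl; rewrite bwd_fwd; reflexivity.
  - intros [b o]; simpl.
    destruct (bwd (e b) o) as [a ha] eqn:Ea; simpl.
    assert (Eo : fwd (e b) (exist _ a ha) = o) by (rewrite <- Ea; apply fwd_bwd).
    destruct ha; rewrite Eo; reflexivity.
Defined.

(** A map [p : W -> T] is homogeneous when every fibre is in bijection with
    the whole domain [W].  Homogeneous maps to a fixed [T] will form a
    transitive [Sym W]-set. *)
Definition homogeneous {W T} (p : W -> T) : Prop :=
  forall y, inhabited (Bij (fib p y) W).

Lemma homogeneous_split {W T} (p : W -> T) :
  homogeneous p -> exists h : Bij W (T * W), forall w, fst (fwd h w) = p w.
Proof.
  intros Hp.
  exists (bij_of_fibers p (fun y => epsilon (Hp y) (fun _ => True))).
  reflexivity.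
Qed.

Lemma homogeneous_conj {W T} (p q : W -> T) :
  homogeneous p -> homogeneous q -> exists g : Bij W W, forall w, p (bwd g w) = q w.
Proof.
  intros Hp Hq.
  destruct (homogeneous_split p Hp) as [hp Ep], (homogeneous_split q Hq) as [hq Eq].
  exists (binv (bcomp (binv hp) hq)); intros w; simpl.
  rewrite <- Ep, fwd_bwd; apply Eq.
Qed.

Lemma homogeneous_perm {W T} (p : W -> T) (g : Bij W W) :
  homogeneous p -> homogeneous (fun w => p (bwd g w)).
Proof.
  intros Hp y; destruct (Hp y) as [e].
  exact (inhabits (bcomp e (fib_transport (binv g) p y))).
Qed.

(** The basic homogeneous maps to [T'] on [U^nat]: [f o fst o h] for a
    bijection [h : U^nat -> T * U^nat] and a surjection [f : T -> T'], when
    [T] injects into [U]; each fibre is [fib f y * U^nat], absorbed by the hotel. *)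
Lemma homogeneous_of_product {T T' U} (h : Bij (nat -> U) (T * (nat -> U)))
  (f : T -> T') (i : T -> U) (inj : forall x y, i x = i y -> x = y)
  (f_surj : forall y, exists t, f t = y) :
  homogeneous (fun w => f (fst (fwd h w))).
Proof.
  intros y; destruct (f_surj y) as [t0 ht0].
  set (j := fun x : fib f y => i (proj1_sig x)).
  assert (j_inj : forall x x', j x = j x' -> x = x') by (intros x x' E; apply sig_ext, inj, E).
  exact (inhabits (bcomp (absorb j j_inj (exist _ t0 ht0))
                     (bcomp (fib_fst_map f y) (fib_transport h (fun z => f (fst z)) y)))).
Qed.

Lemma homogeneous_exists {T U} (i : T -> U) (inj : forall x y, i x = i y -> x = y) (t0 : T) :
  exists p : (nat -> U) -> T, homogeneous p.
Proof.
  exists (fun w => fst (fwd (binv (absorb i inj t0)) w)).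
  apply (homogeneous_of_product _ (fun t => t) i inj); intros y; exists y; reflexivity.
Qed.

Lemma homogeneous_comp {T T' U} (p : (nat -> U) -> T) (f : T -> T')
  (i : T -> U) (inj : forall x y, i x = i y -> x = y)
  (f_surj : forall y, exists t, f t = y) :
  homogeneous p -> homogeneous (fun w => f (p w)).
Proof.
  intros Hp; destruct (homogeneous_split p Hp) as [h Eh].
  replace (fun w => f (p w)) with (fun w => f (fst (fwd h w)))
    by (apply functional_extensionality; intros w; rewrite Eh; reflexivity).
  exact (homogeneous_of_product h f i inj f_surj).
Qed.

Lemma equivariant_surjective (G : Group) {A B} (actA : G -> A -> A) (actB : G -> B -> B)
  (phi : A -> B) :
  (forall g x, phi (actA g x) = actB g (phi x)) ->
  inhabited A -> transitive_action G B actB -> forall y, exists x, phi x = y.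
Proof.
  intros phi_eq [x0] B_tr y.
  destruct (B_tr (phi x0) y) as [g hg].
  exists (actA g x0); rewrite phi_eq; exact hg.
Qed.

Section FirstPassage.

Context {I : Type} (le : I -> I -> Prop).
Hypothesis le_refl : forall a, le a a.
Hypothesis le_trans : forall a b c, le a b -> le b c -> le a c.

Fixpoint stops_at (a : I) (l : list I) : Prop :=
  match l with
  | nil => False
  | x :: l' => (le a x /\ l' = nil) \/ (~ le a x /\ stops_at a l')
  end.

Fixpoint trunc (a : I) (l : list I) : list I :=
  match l with
  | nil => nil
  | x :: l' => if excluded_middle_informative (le a x) then x :: nil else x :: trunc a l'
  end.

Lemma trunc_stops a l : (exists x, In x l /\ le a x) -> stops_at a (trunc a l).
Proof.
  induction l as [| x l IH]; simpl; [intros [x [[] _]] |].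
  intros [y [hy hay]]; destruct (excluded_middle_informative (le a x)) as [h | h]; simpl.
  - left; auto.
  - right; split; [exact h |]; apply IH.
    destruct hy as [<- | hy]; [contradiction | eauto].
Qed.

Lemma stops_hit a l : stops_at a l -> exists x, In x l /\ le a x.
Proof.
  induction l as [| x l IH]; simpl; [tauto |].
  intros [[h _] | [_ h]]; [exists x; auto |].
  destruct (IH h) as [y [hy hay]]; exists y; auto.
Qed.

Lemma trunc_app a l m : stops_at a l -> trunc a (l ++ m) = l.
Proof.
  induction l as [| x l IH]; simpl; [tauto |].
  intros [[h1 h2] | [h1 h2]]; destruct (excluded_middle_informative (le a x));
    subst; try tauto.
  f_equal; auto.
Qed.

Lemma trunc_id a l : stops_at a l -> trunc a l = l.
Proof. intros h; rewrite <- (app_nil_r l) at 1; apply trunc_app, h. Qed.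

Lemma trunc_trunc a b l : le a b -> trunc a (trunc b l) = trunc a l.
Proof.
  intros hab; induction l as [| x l IH]; simpl; [reflexivity |].
  destruct (excluded_middle_informative (le b x)) as [h | h]; simpl;
    destruct (excluded_middle_informative (le a x)) as [h' | h']; try reflexivity.
  - exfalso; eauto.
  - f_equal; exact IH.
Qed.

Lemma trunc_prefix a l : exists r, l = trunc a l ++ r.
Proof.
  induction l as [| x l [r hr]]; simpl; [exists nil; reflexivity |].
  destruct (excluded_middle_informative (le a x)); simpl;
    [exists l | exists r; rewrite <- hr]; reflexivity.
Qed.

Definition Z (a : I) : Type := {l : list I | stops_at a l}.

Definition fZ a b (h : le a b) (l : Z b) : Z a.
Proof.
  refine (exist _ (trunc a (proj1_sig l)) (trunc_stops a _ _)).
  destruct (stops_hit b _ (proj2_sig l)) as [x [hx hbx]]; eauto.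
Defined.

Lemma Z_inverse_system : is_inverse_system le Z fZ.
Proof.
  split.
  - intros a h [l hl]; apply sig_ext, trunc_id, hl.
  - intros a b c hab hbc hac [l hl]; apply sig_ext, trunc_trunc, hab.
Qed.

(** A list stopping at [a] lifts to [b >= a]: append [b], then truncate at [b]. *)
Lemma Z_surjective : surjective_system le Z fZ.
Proof.
  intros a b h [l hl].
  assert (hl' : stops_at b (trunc b (l ++ b :: nil))).
  { apply trunc_stops; exists b; split; [apply in_or_app; simpl; auto | apply le_refl]. }
  exists (exist _ _ hl'); apply sig_ext; simpl.
  rewrite trunc_trunc by exact h; apply trunc_app, hl.
Qed.

Lemma Z_inhabited a : inhabited (Z a).
Proof. constructor; exists (a :: nil); left; auto. Qed.

(** A point of the limit of [Z] gives a cofinal sequence: the lists of a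
    compatible family are prefixes of one another, so their [n]-th entries
    agree, and every [a] lies below some entry of the list at [a]. *)
Lemma Z_limit_cofinal :
  (forall a b, exists c, le a c /\ le b c) -> inhabited I ->
  inv_limit_nonempty le Z fZ -> has_countable_cofinal_seq le.
Proof.
  intros le_dir [d] [x Hx].
  set (L := fun a => proj1_sig (x a)).
  assert (HL : forall a c, le a c -> exists r, L c = L a ++ r).
  { intros a c h; destruct (trunc_prefix a (L c)) as [r hr]; exists r.
    rewrite hr at 1; unfold L; rewrite <- (Hx a c h); reflexivity. }
  assert (entries_agree : forall a b n, n < length (L a) -> n < length (L b) ->
                            nth n (L a) d = nth n (L b) d).
  { intros a b n ha hb; destruct (le_dir a b) as [c [hac hbc]].
    destruct (HL a c hac) as [r1 E1], (HL b c hbc) as [r2 E2].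
    rewrite <- (app_nth1 _ r1 d ha), <- (app_nth1 _ r2 d hb), <- E1, <- E2; reflexivity. }
  set (s := fun n => match excluded_middle_informative (exists a, n < length (L a)) with
                     | left e => nth n (L (proj1_sig (constructive_indefinite_description _ e))) d
                     | right _ => d
                     end).
  exists s; intros a.
  destruct (stops_hit a (L a) (proj2_sig (x a))) as [y [hy hay]].
  destruct (In_nth _ _ d hy) as [n [hn Ey]].
  exists n; unfold s.
  destruct (excluded_middle_informative (exists a, n < length (L a))) as [e | ne];
    [| exfalso; eauto].
  destruct (constructive_indefinite_description _ e) as [b hb]; simpl.
  rewrite (entries_agree b a n hb hn), Ey; exact hay.
Qed.

End FirstPassage.

(** The first-passage system [Z] is turned into a surjective
    system of transitive [Sym W]-sets, [W = (list I)^nat]: [Y a] is the set of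
    homogeneous maps [W -> Z a], permutations act by precomposition and
    truncation acts by postcomposition.  Evaluating a limit point of [Y] at a
    fixed element of [W] gives a limit point of [Z], hence a cofinal sequence. *)
Lemma cond5_cofinal {I : Type} (le : I -> I -> Prop) :
  directed_preorder le -> inhabited I -> cond5 le -> has_countable_cofinal_seq le.
Proof.
  intros [le_refl [le_trans le_dir]] I_inh H5.
  set (W := nat -> list I).
  set (Y := fun a => {p : W -> Z le a | homogeneous p}).
  assert (val_inj : forall a (x y : Z le a), proj1_sig x = proj1_sig y -> x = y)
    by (intros a; apply sig_ext).
  set (fY := fun a b h (p : Y b) =>
    exist homogeneous (fun w => fZ le le_trans a b h (proj1_sig p w))
      (homogeneous_comp _ _ _ (val_inj b) (Z_surjective le le_refl le_trans a b h)
         (proj2_sig p)) : Y a).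
  set (act := fun a (g : Sym W) (p : Y a) =>
    exist homogeneous (fun w => proj1_sig p (bwd g w)) (homogeneous_perm _ g (proj2_sig p)) : Y a).
  pose proof (Z_inverse_system le le_trans) as [Z_id Z_comp].
  assert (Y_inh : forall a, inhabited (Y a)).
  { intros a; destruct (Z_inhabited le le_refl a) as [z0].
    destruct (homogeneous_exists _ (val_inj a) z0) as [p Hp]; exact (inhabits (exist _ p Hp)). }
  assert (Y_tr : forall a, transitive_action (Sym W) (Y a) (act a)).
  { intros a [p Hp] [q Hq]; destruct (homogeneous_conj p q Hp Hq) as [g Hg].
    exists g; apply sig_ext, functional_extensionality, Hg. }
  assert (fY_equivariant : forall a b (h : le a b) g p, fY a b h (act b g p) = act a g (fY a b h p))
    by (intros; apply sig_ext; reflexivity).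
  destruct (H5 (Sym W) Y fY act) as [x Hx].
  - split; intros; apply sig_ext, functional_extensionality; intros w;
      [apply Z_id | apply Z_comp].
  - intros a b h; apply (equivariant_surjective (Sym W) (act b) (act a)); auto.
  - exact Y_inh.
  - intros a; split; intros; apply sig_ext; reflexivity.
  - exact Y_tr.
  - exact fY_equivariant.
  - apply (Z_limit_cofinal le le_trans le_dir I_inh).
    exists (fun a => proj1_sig (x a) (fun _ => nil)).
    intros a b h; rewrite <- (Hx a b h); reflexivity.
Qed.

Theorem theorem1 (I : Type) (le : I -> I -> Prop)
  (Hdir : directed_preorder le) (Hne : inhabited I) :
  (cond1 le <-> cond2 le) /\ (cond1 le <-> cond3 le) /\
  (cond1 le <-> cond4 le) /\ (cond1 le <-> cond5 le).
Proof.
  pose proof Hdir as [le_refl [le_trans le_dir]].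
  pose proof (cond1_cond2 le le_refl le_trans le_dir) as H12.
  assert (H51 : cond5 le -> cond1 le) by (intros H5; right; exact (cond5_cofinal le Hdir Hne H5)).
  pose proof (cond2_cond3 le) as H23.
  pose proof (cond3_cond2 le) as H32.
  pose proof (cond2_cond4 le Hdir) as H24.
  pose proof (cond4_cond2 le le_refl) as H42.
  pose proof (cond2_cond5 le) as H25.
  tauto.
Qed.
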